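(* Let $n\ge1$, let $u(z)$ be a scalar function and $\mathbf v(z)\in\mathbb R^n$ a vector function (column vector), let $A$ be a constant real skew-symmetric $n\times n$ matrix and $\beta$ a constant. Define the block matrices of block size $(1,1,n,1)\times(1,1,n,1)$ \[ {\cal B}_0=\begin{pmatrix} -1 & 0 & 0 & 0\\ 0 & 0 & 0 & 0\\ 0 & 0 & 0 & 0\\ 0 & 0 & 0 & 1 \end{pmatrix},\quad {\cal B}_1=\begin{pmatrix} 0 & 1 & 0 & 0\\ u & 0 & 0 & 1\\ \mathbf v & 0 & 0 & 0\\ 0 & u & \mathbf v^T & 0 \end{pmatrix},\quad {\cal B}_2= \begin{pmatrix} u & 0 & 0 & 0\\ u' & 0 & \mathbf v^T & 0\\ \mathbf v' & -\mathbf v & 0 & 0\\ 0 & u' & (\mathbf v')^T & -u \end{pmatrix}, \] and ${\cal B}=\zeta{\cal B}_0+{\cal B}_1$, where $\zeta$ is a spectral parameter. Then: (a) The system $u''=\frac32u^2-\frac32(\mathbf v,\mathbf v)+\beta$, $\mathbf v'''=3u\mathbf v'+3u'\mathbf v+A\mathbf v$ admits the isospectral Lax pair ${\cal A}'=[{\cal B},{\cal A}]$ with ${\cal A}=\zeta^3{\cal B}_0+\zeta^2{\cal B}_1+\zeta{\cal B}_2+{\cal B}_3$, where \[ {\cal B}_3= \begin{pmatrix} u' & -u & \mathbf v^T & 0\\ \frac{1}{2}u^2-\frac{1}{2}(\mathbf v,\mathbf v)+\beta & 0 & (\mathbf v')^T & -u\\ \mathbf v''-2u\mathbf v & -\mathbf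 v' & -A & \mathbf v\\ 0 & \frac{1}{2}u^2-\frac{1}{2}(\mathbf v,\mathbf v)+\beta & (\mathbf v'')^T-2u\mathbf v^T & -u' \end{pmatrix}. \] (b) The system $u''=\frac32u^2-\frac32(\mathbf v,\mathbf v)+z$, $\mathbf v'''=3u\mathbf v'+3u'\mathbf v+A\mathbf v$ admits the isomonodromic Lax pair ${\cal A}'={\cal B}_\zeta+[{\cal B},{\cal A}]$ with ${\cal A}=\zeta^4{\cal B}_0+\zeta^3{\cal B}_1+\zeta^2{\cal B}_2+\zeta{\cal B}_3+{\cal B}_4$, where \[ {\cal B}_3= \begin{pmatrix} u' & -u & \mathbf v^T & 0\\ \frac{1}{2}u^2-\frac{1}{2}(\mathbf v,\mathbf v)+z & 0 & (\mathbf v')^T & -u\\ \mathbf v''-2u\mathbf v & -\mathbf v' & -A & \mathbf v\\ 0 & \frac{1}{2}u^2-\frac{1}{2}(\mathbf v,\mathbf v)+z & (\mathbf v'')^T-2u\mathbf v^T & -u' \end{pmatrix},\quad {\cal B}_4=\begin{pmatrix} 0 & 0 & 0 & 0\\ 1 & 0 & 0 & 0\\ 0 & 0 & 0 & 0\\ 0 & 1 & 0 & 0 \end{pmatrix}. \] (c) The system $u'''=3uu'-3(\mathbf v,\mathbf v')+zu'+2u$, $\mathbf v'''=3u\mathbf v'+3u'\mathbf v+z\mathbf v'+(A+2)\mathbf v$ admits the isomonodromic Lax pair ${\cal A}'={\cal B}_\zeta+[{\cal B},{\cal A}]$ with ${\cal A}=-(\zeta-z\zeta^{-1}){\cal B}-{\cal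 B}_2-\zeta^{-1}{\cal B}_3$, where \[ {\cal B}_3= \begin{pmatrix} u'+1 & -u & \mathbf v^T & 0\\ u''-u^2+(\mathbf v,\mathbf v) & 0 & (\mathbf v')^T & -u\\ \mathbf v''-2u\mathbf v & -\mathbf v' & -A & \mathbf v\\ 0 & u''-u^2+(\mathbf v,\mathbf v) & (\mathbf v'')^T-2u\mathbf v^T & -u'-1 \end{pmatrix}. \]
   Context: Primes denote derivatives with respect to $z$; $\zeta$ is independent of $z$; $(\cdot,\cdot)$ is the standard scalar product on $\mathbb R^n$; in (c), $A+2$ means $A+2I_n$. ''Admits the Lax pair'' means the stated matrix equation holds by virtue of the system. *)

From HB Require Import structures.
From mathcomp Require Import all_boot all_order all_algebra.
From mathcomp Require Import all_classical all_reals all_analysis.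
Set Implicit Arguments. Unset Strict Implicit. Unset Printing Implicit Defensive.
Import Order.TTheory GRing.Theory Num.Theory.
Import numFieldNormedType.Exports.
Local Open Scope ring_scope.

Section LaxDefs.
Variables (R : realType) (n : nat).

Definition mxder (p q : nat) (F : R -> 'M[R]_(p, q)) (x : R) : 'M[R]_(p, q) :=
  \matrix_(i, j) derive1 (fun t => F t i j) x.

Definition mxderivable (p q : nat) (F : R -> 'M[R]_(p, q)) : Prop :=
  forall i j x, derivable (fun t => F t i j) x 1.

Definition dotv (x y : 'cV[R]_n) : R := (x^T *m y) 0 0.

Definition blk4
  (a11 a12 : 'M[R]_1) (a13 : 'M[R]_(1, n)) (a14 : 'M[R]_1)
  (a21 a22 : 'M[R]_1) (a23 : 'M[R]_(1, n)) (a24 : 'M[R]_1)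
  (a31 a32 : 'M[R]_(n, 1)) (a33 : 'M[R]_n) (a34 : 'M[R]_(n, 1))
  (a41 a42 : 'M[R]_1) (a43 : 'M[R]_(1, n)) (a44 : 'M[R]_1)
  : 'M[R]_((1 + 1) + (n + 1)) :=
  block_mx (block_mx a11 a12 a21 a22) (block_mx a13 a14 a23 a24)
           (block_mx a31 a32 a41 a42) (block_mx a33 a34 a43 a44).

Definition LB0 : 'M[R]_((1 + 1) + (n + 1)) :=
  blk4 (-1)%:M 0 0 0
       0 0 0 0
       0 0 0 0
       0 0 0 1%:M.

Definition LB1 (u : R) (v : 'cV[R]_n) : 'M[R]_((1 + 1) + (n + 1)) :=
  blk4 0 1%:M 0 0
       u%:M 0 0 1%:M
       v 0 0 0
       0 u%:M v^T 0.

Definition LB2 (u u1 : R) (v v1 : 'cV[R]_n) : 'M[R]_((1 + 1) + (n + 1)) :=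
  blk4 u%:M 0 0 0
       u1%:M 0 v^T 0
       v1 (- v) 0 0
       0 u1%:M v1^T (- u)%:M.

(* Generic shape of B3: e is added to the (1,1) entry and subtracted from the
   (4,4) entry, w is the common (2,1)/(4,2) entry. *)
Definition LB3gen (A : 'M[R]_n) (e w u u1 : R) (v v1 v2 : 'cV[R]_n)
  : 'M[R]_((1 + 1) + (n + 1)) :=
  blk4 (u1 + e)%:M (- u)%:M v^T 0
       w%:M 0 v1^T (- u)%:M
       (v2 - u *+ 2 *: v) (- v1) (- A) v
       0 w%:M (v2^T - u *+ 2 *: v^T) (- u1 - e)%:M.

(* B3 of parts (a) (c := beta) and (b) (c := z) *)
Definition LB3ab (A : 'M[R]_n) (c u u1 : R) (v v1 v2 : 'cV[R]_n) :=
  LB3gen A 0 (u ^+ 2 / 2 - dotv v v / 2 + c) u u1 v v1 v2.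

Definition LB3c (A : 'M[R]_n) (u u1 u2 : R) (v v1 v2 : 'cV[R]_n) :=
  LB3gen A 1 (u2 - u ^+ 2 + dotv v v) u u1 v v1 v2.

Definition LB4 : 'M[R]_((1 + 1) + (n + 1)) :=
  blk4 0 0 0 0
       1%:M 0 0 0
       0 0 0 0
       0 1%:M 0 0.

Definition LB (zeta u : R) (v : 'cV[R]_n) := zeta *: LB0 + LB1 u v.

Definition mxcomm (m : nat) (X Y : 'M[R]_m) := X *m Y - Y *m X.

End LaxDefs.

(* Expanding the Lax equation in powers of the spectral parameter zeta reduces it to
   three coefficient identities that hold along solutions:
     B1' = [B0, B2],    B2' = [B0, B3] + [B1, B2],    B3' = [B1, B3] + D.
   The second one holds as soon as u'' = w + u^2 - (v, v), where w is the (2,1) entry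
   of B3; the third one uses the equation for v''' and the skew-symmetry of A.  The
   defect D vanishes in case (a); in case (b) it is B4, coming from the explicit
   z-dependence of B3, and it is balanced by B_zeta = B0, [B0, B4] = B4 and
   [B1, B4] = -B0; in case (c) it is B1 + z [B0, B2], and the expansion only needs
   [X, c X] = 0 for X = zeta B0 + B1. *)

From HB Require Import structures.
From mathcomp Require Import all_boot all_order all_algebra.
From mathcomp Require Import all_classical all_reals all_analysis.
From mathcomp Require Import ring.
Import Order.TTheory GRing.Theory Num.Theory.
Import numFieldNormedType.Exports.
Local Open Scope ring_scope.

Set Implicit Arguments. Unset Strict Implicit. Unset Printing Implicit Defensive.

Section MatrixDerivative.
Variable R : realType.
Implicit Types (z : R).

Definition is_mxderive p q (F : R -> 'M[R]_(p, q)) z (M : 'M[R]_(p, q)) :=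
  forall i j, is_derive z (1 : R) (fun t => F t i j) (M i j).

Variables (p q : nat).
Implicit Types (F G : R -> 'M[R]_(p, q)) (M N : 'M[R]_(p, q)).

Lemma mxderE F z M : is_mxderive F z M -> mxder F z = M.
Proof. by move=> dF; apply/matrixP => i j; rewrite mxE derive1E; case: (dF i j). Qed.

Lemma mxderivableP F z : mxderivable F -> is_mxderive F z (mxder F z).
Proof. by move=> dF i j; rewrite mxE derive1E; apply: derivableP. Qed.

Lemma is_mxderive_eq F z M N : is_mxderive F z M -> M = N -> is_mxderive F z N.
Proof. by move=> ? <-. Qed.

Lemma is_mxderive_cst (C : 'M[R]_(p, q)) z : is_mxderive (fun=> C) z 0.
Proof. by move=> i j; rewrite mxE; apply: is_derive_cst. Qed.

Lemma is_mxderiveD F G z M N : is_mxderive F z M -> is_mxderive G z N ->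
  is_mxderive (fun t => F t + G t) z (M + N).
Proof.
move=> dF dG i j; rewrite mxE; under eq_fun do rewrite mxE.
exact: is_deriveD.
Qed.

Lemma is_mxderiveN F z M : is_mxderive F z M -> is_mxderive (fun t => - F t) z (- M).
Proof.
move=> dF i j; rewrite mxE; under eq_fun do rewrite mxE.
exact: is_deriveN.
Qed.

Lemma is_mxderiveB F G z M N : is_mxderive F z M -> is_mxderive G z N ->
  is_mxderive (fun t => F t - G t) z (M - N).
Proof. by move=> dF dG; apply: is_mxderiveD => //; apply: is_mxderiveN. Qed.

Lemma is_mxderiveZ (k : R) F z M : is_mxderive F z M ->
  is_mxderive (fun t => k *: F t) z (k *: M).
Proof. by move=> dF i j; rewrite mxE; under eq_fun do rewrite mxE; apply: is_deriveZ. Qed.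

Lemma is_mxderive_scale (f : R -> R) F z df M :
  is_derive z (1 : R) f df -> is_mxderive F z M ->
  is_mxderive (fun t => f t *: F t) z (f z *: M + df *: F z).
Proof.
move=> df_ dF i j; rewrite !mxE; under eq_fun do rewrite mxE.
apply: (is_derive_eq (is_deriveM df_ (dF i j))).
by rewrite [F z i j *: _]mulrC.
Qed.

Lemma is_mxderive_scalar (f : R -> R) z df : is_derive z (1 : R) f df ->
  is_mxderive (fun t => (f t)%:M : 'M[R]_p) z df%:M.
Proof.
move=> df_ i j; rewrite mxE; under eq_fun do rewrite mxE.
by case: (i == j) => /=; rewrite ?mulr1n ?mulr0n //; apply: is_derive_cst.
Qed.

Lemma is_mxderive_trmx F z M : is_mxderive F z M -> is_mxderive (fun t => (F t)^T) z M^T.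
Proof. by move=> dF i j; rewrite mxE; under eq_fun do rewrite mxE. Qed.

End MatrixDerivative.

Section MatrixDerivativeRules.
Variable R : realType.
Implicit Types (z : R).

Lemma is_mxderive_block p1 p2 q1 q2 (F1 : R -> 'M[R]_(p1, q1)) (F2 : R -> 'M[R]_(p1, q2))
    (F3 : R -> 'M[R]_(p2, q1)) (F4 : R -> 'M[R]_(p2, q2)) z M1 M2 M3 M4 :
  is_mxderive F1 z M1 -> is_mxderive F2 z M2 -> is_mxderive F3 z M3 -> is_mxderive F4 z M4 ->
  is_mxderive (fun t => block_mx (F1 t) (F2 t) (F3 t) (F4 t)) z (block_mx M1 M2 M3 M4).
Proof.
move=> dF1 dF2 dF3 dF4 i j.
case: (split_ordP i) => {}i ->; case: (split_ordP j) => {}j ->.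
- by rewrite block_mxEul; under eq_fun do rewrite block_mxEul.
- by rewrite block_mxEur; under eq_fun do rewrite block_mxEur.
- by rewrite block_mxEdl; under eq_fun do rewrite block_mxEdl.
- by rewrite block_mxEdr; under eq_fun do rewrite block_mxEdr.
Qed.

Lemma is_mxderiveM p q r (F : R -> 'M[R]_(p, q)) (G : R -> 'M[R]_(q, r)) z M N :
  is_mxderive F z M -> is_mxderive G z N ->
  is_mxderive (fun t => F t *m G t) z (M *m G z + F z *m N).
Proof.
move=> dF dG i j; under eq_fun do rewrite mxE.
have -> : (fun t => \sum_k F t i k * G t k j) = \sum_k (fun t => F t i k * G t k j).
  by apply/funext => t; rewrite fct_sumE.
apply: (is_derive_eq (is_derive_sum (fun k => is_deriveM (dF i k) (dG k j)))).
rewrite !mxE -big_split; apply: eq_bigr => k _ /=.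
by rewrite addrC [G z k j *: _]mulrC.
Qed.

Lemma is_derive_dotv n (F G : R -> 'cV[R]_n) z M N :
  is_mxderive F z M -> is_mxderive G z N ->
  is_derive z (1 : R) (fun t => dotv (F t) (G t)) (dotv M (G z) + dotv (F z) N).
Proof.
move=> dF dG; have := is_mxderiveM (is_mxderive_trmx dF) dG 0 0.
by rewrite mxE.
Qed.

End MatrixDerivativeRules.

Section DotProduct.
Variables (R : realType) (n : nat).
Implicit Types (x y : 'cV[R]_n).

Lemma dotvE x y : x^T *m y = (dotv x y)%:M.
Proof. exact: mx11_scalar. Qed.

Lemma dotvC x y : dotv x y = dotv y x.
Proof. by rewrite /dotv !mxE; apply: eq_bigr => k _; rewrite !mxE mulrC. Qed.

End DotProduct.

Section Commutator.
Variables (R : realType) (m : nat).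
Implicit Types (X Y Z : 'M[R]_m).

Lemma mxcommDl X Y Z : mxcomm (X + Y) Z = mxcomm X Z + mxcomm Y Z.
Proof. by rewrite /mxcomm mulmxDl mulmxDr opprD addrACA. Qed.

Lemma mxcommDr X Y Z : mxcomm X (Y + Z) = mxcomm X Y + mxcomm X Z.
Proof. by rewrite /mxcomm mulmxDl mulmxDr opprD addrACA. Qed.

Lemma mxcommNr X Y : mxcomm X (- Y) = - mxcomm X Y.
Proof. by rewrite /mxcomm mulmxN mulNmx opprB opprK addrC. Qed.

Lemma mxcommBr X Y Z : mxcomm X (Y - Z) = mxcomm X Y - mxcomm X Z.
Proof. by rewrite mxcommDr mxcommNr. Qed.

Lemma mxcommZl (a : R) X Y : mxcomm (a *: X) Y = a *: mxcomm X Y.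
Proof. by rewrite /mxcomm scalerBr -scalemxAl -scalemxAr. Qed.

Lemma mxcommZr (a : R) X Y : mxcomm X (a *: Y) = a *: mxcomm X Y.
Proof. by rewrite /mxcomm scalerBr -scalemxAl -scalemxAr. Qed.

Lemma mxcommxx X : mxcomm X X = 0.
Proof. exact: subrr. Qed.

Lemma mxcommC X Y : mxcomm Y X = - mxcomm X Y.
Proof. by rewrite /mxcomm opprB. Qed.

End Commutator.

Ltac ord1s := repeat match goal with i : 'I_1 |- _ => rewrite (ord1 i); clear i end.

Ltac block_expand :=
  rewrite /mxcomm /blk4 ?(mulmx_block, add_block_mx, opp_block_mx, scale_block_mx);
  repeat congr block_mx;
  rewrite ?(mulmxDl, mulmxDr, mulmxBl, mulmxBr, mulmxN, mulNmx, mul0mx, mulmx0,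
            mul1mx, mulmx1, mul_scalar_mx, mul_mx_scalar) -?scalemxAl -?scalemxAr.

Ltac entrywise_ring :=
  apply/matrixP => ? ?; ord1s; rewrite !mxE ?big_ord1 ?mxE ?eqxx ?mulr1n; ring.

Ltac generalize_lax_atoms :=
  repeat match goal with |- context [mxcomm ?X ?Y] => move: (mxcomm X Y) => ? end;
  repeat match goal with
  | |- context [LB0 ?R ?n] => move: (LB0 R n) => ?
  | |- context [LB1 ?u ?v] => move: (LB1 u v) => ?
  | |- context [LB4 ?R ?n] => move: (LB4 R n) => ?
  end;
  apply/matrixP => ? ?; rewrite !mxE.

Ltac mxderive :=
  repeat first
   [ apply: is_mxderive_block
   | apply: is_mxderive_cst
   | apply: is_mxderiveD | apply: is_mxderiveB | apply: is_mxderiveN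
   | apply: is_mxderive_scale
   | apply: is_mxderive_scalar
   | apply: is_mxderive_trmx
   | match goal with H : is_mxderive _ _ _ |- _ => apply: H end
   | apply: is_deriveB | apply: is_deriveD | apply: is_deriveN | apply: is_derive_cst
   | match goal with H : is_derive _ _ _ _ |- _ => apply: H end ].

Section LaxBlocks.
Variables (R : realType) (n : nat) (A : 'M[R]_n).

Lemma mxcomm_LB0_LB2 (u u1 : R) (v v1 : 'cV[R]_n) :
  mxcomm (LB0 R n) (LB2 u u1 v v1) = LB1 u1 v1 - LB1 0 0.
Proof. by block_expand; entrywise_ring. Qed.

Lemma mxcomm_LB0_LB3gen_LB1_LB2 (e w u u1 : R) (v v1 v2 : 'cV[R]_n) :
  mxcomm (LB0 R n) (LB3gen A e w u u1 v v1 v2) + mxcomm (LB1 u v) (LB2 u u1 v v1)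
  = LB2 u1 (w + u ^+ 2 - dotv v v) v1 v2.
Proof.
block_expand.
all: rewrite ?dotvE ?(dotvC v1 v).
all: entrywise_ring.
Qed.

Lemma mxcomm_LB0_LB4 : mxcomm (LB0 R n) (LB4 R n) = LB4 R n.
Proof. by block_expand; entrywise_ring. Qed.

Lemma mxcomm_LB1_LB4 (u : R) (v : 'cV[R]_n) : mxcomm (LB1 u v) (LB4 R n) = - LB0 R n.
Proof. by block_expand; entrywise_ring. Qed.

Lemma LB1_affine (a b c : R) (x y : 'cV[R]_n) :
  LB1 (a + c * b) (x + c *: y) = LB1 a x + c *: (LB1 b y - LB1 0 0).
Proof. by block_expand; entrywise_ring. Qed.

Definition lax_defect (e r : R) (s : 'cV[R]_n) : 'M[R]_((1 + 1) + (n + 1)) :=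
  blk4 0 e%:M 0 0 r%:M 0 0 e%:M s 0 0 0 0 r%:M s^T 0.

Lemma lax_defect_eq0 (r : R) (s : 'cV[R]_n) : r = 0 -> s = 0 -> lax_defect 0 r s = 0.
Proof. by move=> -> ->; rewrite /lax_defect /blk4 raddf0 trmx0 !block_mx0. Qed.

Lemma lax_defect_eqLB4 (r : R) (s : 'cV[R]_n) :
  r = 1 -> s = 0 -> lax_defect 0 r s = LB4 R n.
Proof. by move=> -> ->; rewrite /lax_defect raddf0 trmx0. Qed.

Lemma lax_defect1 (r : R) (s : 'cV[R]_n) : lax_defect 1 r s = LB1 r s.
Proof. by []. Qed.

Lemma is_mxderive_LB (u : R) (v : 'cV[R]_n) zeta :
  is_mxderive (fun s => LB s u v) zeta (LB0 R n).
Proof.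
apply: is_mxderive_eq.
  apply: is_mxderiveD (is_mxderive_cst _ _).
  exact: is_mxderive_scale (is_derive_id _ _) (is_mxderive_cst _ _).
by rewrite scaler0 scale1r add0r addr0.
Qed.

End LaxBlocks.

Section LaxPairs.
Variables (R : realType) (n : nat) (A : 'M[R]_n).
Hypothesis skewA : A^T = - A.
Variables (u : R -> R) (v : R -> 'cV[R]_n).
Hypotheses (du : forall z, derivable u z 1) (du1 : forall z, derivable (derive1 u) z 1).
Hypothesis du2 : forall z, derivable (derive1 (derive1 u)) z 1.
Hypotheses (dv : mxderivable v) (dv1 : mxderivable (mxder v)).
Hypothesis dv2 : mxderivable (mxder (mxder v)).

Local Notation u1 := (derive1 u).
Local Notation u2 := (derive1 (derive1 u)).
Local Notation u3 := (derive1 (derive1 (derive1 u))).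
Local Notation v1 := (mxder v).
Local Notation v2 := (mxder (mxder v)).
Local Notation v3 := (mxder (mxder (mxder v))).

Let Du z : is_derive z (1 : R) u (u1 z).
Proof. by rewrite derive1E; apply: derivableP. Qed.

Let Du1 z : is_derive z (1 : R) u1 (u2 z).
Proof. by rewrite derive1E; apply: derivableP. Qed.

Let Du2 z : is_derive z (1 : R) u2 (u3 z).
Proof. by rewrite derive1E; apply: derivableP. Qed.

Let trmx_skew_mul (x : 'cV[R]_n) : x^T *m A = - (A *m x)^T.
Proof. by rewrite trmx_mul skewA mulmxN opprK. Qed.

Lemma is_mxderive_LB1 z :
  is_mxderive (fun t => LB1 (u t) (v t)) z (mxcomm (LB0 R n) (LB2 (u z) (u1 z) (v z) (v1 z))).
Proof.
have Duz := Du z; have Dv := mxderivableP z dv.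
rewrite mxcomm_LB0_LB2; apply: is_mxderive_eq; first by rewrite /LB1; mxderive.
by block_expand; entrywise_ring.
Qed.

Lemma is_mxderive_LB2 (e w : R) z : u2 z = w + u z ^+ 2 - dotv (v z) (v z) ->
  is_mxderive (fun t => LB2 (u t) (u1 t) (v t) (v1 t)) z
    (mxcomm (LB0 R n) (LB3gen A e w (u z) (u1 z) (v z) (v1 z) (v2 z))
     + mxcomm (LB1 (u z) (v z)) (LB2 (u z) (u1 z) (v z) (v1 z))).
Proof.
move=> hu2; rewrite mxcomm_LB0_LB3gen_LB1_LB2 -hu2.
have Duz := Du z; have Du1z := Du1 z.
have Dv := mxderivableP z dv; have Dv1 := mxderivableP z dv1.
by rewrite /LB2; mxderive.
Qed.

Lemma is_mxderive_LB3gen (e : R) (w : R -> R) (w1 : R) z :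
  is_derive z (1 : R) w w1 -> u2 z = w z + u z ^+ 2 - dotv (v z) (v z) ->
  is_mxderive (fun t => LB3gen A e (w t) (u t) (u1 t) (v t) (v1 t) (v2 t)) z
    (mxcomm (LB1 (u z) (v z)) (LB3gen A e (w z) (u z) (u1 z) (v z) (v1 z) (v2 z))
     + lax_defect e (w1 - u z * (u1 z + e) + dotv (v z) (v1 z))
         (v3 z - (3 * u1 z) *: v z - (3 * u z) *: v1 z - A *m v z - e *: v z)).
Proof.
move=> Dw hu2; have Duz := Du z; have Du1z := Du1 z.
have Dv := mxderivableP z dv; have Dv1 := mxderivableP z dv1; have Dv2 := mxderivableP z dv2.
apply: is_mxderive_eq; first by rewrite /LB3gen; mxderive.
rewrite hu2 /lax_defect.
move: (u z) (u1 z) (w z) (v z) (v1 z) (v2 z) (v3 z) => U U1 W V V1 V2 V3.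
block_expand.
all: rewrite ?dotvE ?(dotvC V1 V) ?(dotvC V2 V) ?trmx_skew_mul.
all: entrywise_ring.
Qed.

Lemma isospectral_lax_pair (beta : R) :
  (forall z, u2 z = 3 / 2 * u z ^+ 2 - 3 / 2 * dotv (v z) (v z) + beta) ->
  (forall z, v3 z = (3 * u z) *: v1 z + (3 * u1 z) *: v z + A *m v z) ->
  let calA := fun (z zeta : R) =>
    zeta ^+ 3 *: LB0 R n + zeta ^+ 2 *: LB1 (u z) (v z)
    + zeta *: LB2 (u z) (u1 z) (v z) (v1 z)
    + LB3ab A beta (u z) (u1 z) (v z) (v1 z) (v2 z) in
  forall z zeta : R,
    mxder (fun t => calA t zeta) z = mxcomm (LB zeta (u z) (v z)) (calA z zeta).
Proof.
move=> hu hv calA z zeta.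
pose w t := u t ^+ 2 / 2 - dotv (v t) (v t) / 2 + beta.
have hw : u2 z = w z + u z ^+ 2 - dotv (v z) (v z) by rewrite hu /w; field.
have Dw : is_derive z (1 : R) w (u z * u1 z - dotv (v z) (v1 z)).
  have Duz := Du z; have Dvv := is_derive_dotv (mxderivableP z dv) (mxderivableP z dv).
  by apply: is_derive_eq; rewrite /GRing.scale /= (dotvC (v1 z)); field.
have := is_mxderive_LB3gen 0 Dw hw.
rewrite hv lax_defect_eq0 ?addr0 => [D3 | | ];
  [| by ring | by apply/matrixP => i j; rewrite !mxE; ring].
have D : is_mxderive (fun t => calA t zeta) z _ :=
  is_mxderiveD (is_mxderiveD (is_mxderiveD (is_mxderive_cst _ _)
    (is_mxderiveZ _ (is_mxderive_LB1 z))) (is_mxderiveZ _ (is_mxderive_LB2 0 hw))) D3.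
rewrite (mxderE D) /calA /LB /LB3ab /w.
rewrite !(mxcommDl, mxcommDr, mxcommZl, mxcommZr) !mxcommxx (mxcommC (LB1 _ _) (LB0 R n)).
by generalize_lax_atoms; ring.
Qed.

Lemma isomonodromic_lax_pair_b :
  (forall z, u2 z = 3 / 2 * u z ^+ 2 - 3 / 2 * dotv (v z) (v z) + z) ->
  (forall z, v3 z = (3 * u z) *: v1 z + (3 * u1 z) *: v z + A *m v z) ->
  let calA := fun (z zeta : R) =>
    zeta ^+ 4 *: LB0 R n + zeta ^+ 3 *: LB1 (u z) (v z)
    + zeta ^+ 2 *: LB2 (u z) (u1 z) (v z) (v1 z)
    + zeta *: LB3ab A z (u z) (u1 z) (v z) (v1 z) (v2 z)
    + LB4 R n in
  forall z zeta : R,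
    mxder (fun t => calA t zeta) z
    = mxder (fun s => LB s (u z) (v z)) zeta + mxcomm (LB zeta (u z) (v z)) (calA z zeta).
Proof.
move=> hu hv calA z zeta.
pose w t := u t ^+ 2 / 2 - dotv (v t) (v t) / 2 + t.
have hw : u2 z = w z + u z ^+ 2 - dotv (v z) (v z) by rewrite hu /w; field.
have Dw : is_derive z (1 : R) w (u z * u1 z - dotv (v z) (v1 z) + 1).
  have Duz := Du z; have Dvv := is_derive_dotv (mxderivableP z dv) (mxderivableP z dv).
  by apply: is_derive_eq; rewrite /GRing.scale /= (dotvC (v1 z)); field.
have := is_mxderive_LB3gen 0 Dw hw.
rewrite hv lax_defect_eqLB4 => [D3 | | ];
  [| by ring | by apply/matrixP => i j; rewrite !mxE; ring].
have D : is_mxderive (fun t => calA t zeta) z _ :=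
  is_mxderiveD (is_mxderiveD (is_mxderiveD (is_mxderiveD (is_mxderive_cst _ _)
    (is_mxderiveZ _ (is_mxderive_LB1 z))) (is_mxderiveZ _ (is_mxderive_LB2 0 hw)))
    (is_mxderiveZ _ D3)) (is_mxderive_cst _ _).
rewrite (mxderE D) (mxderE (is_mxderive_LB _ _ _)) /calA /LB /LB3ab /w.
rewrite !(mxcommDl, mxcommDr, mxcommZl, mxcommZr) !mxcommxx (mxcommC (LB1 _ _) (LB0 R n)).
rewrite mxcomm_LB0_LB4 mxcomm_LB1_LB4.
by generalize_lax_atoms; ring.
Qed.

Lemma isomonodromic_lax_pair_c :
  (forall z, u3 z = 3 * u z * u1 z - 3 * dotv (v z) (v1 z) + z * u1 z + 2 * u z) ->
  (forall z, v3 z = (3 * u z) *: v1 z + (3 * u1 z) *: v z + z *: v1 z + (A + 2%:M) *m v z) ->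
  let calA := fun (z zeta : R) =>
    - ((zeta - z / zeta) *: LB zeta (u z) (v z))
    - LB2 (u z) (u1 z) (v z) (v1 z)
    - zeta^-1 *: LB3c A (u z) (u1 z) (u2 z) (v z) (v1 z) (v2 z) in
  forall z zeta : R, zeta != 0 ->
    mxder (fun t => calA t zeta) z
    = mxder (fun s => LB s (u z) (v z)) zeta + mxcomm (LB zeta (u z) (v z)) (calA z zeta).
Proof.
move=> hu hv calA z zeta zeta0.
pose w t := u2 t - u t ^+ 2 + dotv (v t) (v t).
have hw : u2 z = w z + u z ^+ 2 - dotv (v z) (v z) by rewrite /w; ring.
have Dw : is_derive z (1 : R) w (u3 z - 2 * u z * u1 z + 2 * dotv (v z) (v1 z)).
  have Duz := Du z; have Du2z := Du2 z.
  have Dvv := is_derive_dotv (mxderivableP z dv) (mxderivableP z dv).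
  by apply: is_derive_eq; rewrite /GRing.scale /= (dotvC (v1 z)); ring.
have := is_mxderive_LB3gen 1 Dw hw.
rewrite hv mulmxDl mul_scalar_mx hu.
rewrite (_ : _ - _ + _ = u z + z * u1 z); last by ring.
rewrite (_ : _ - _ - _ - _ - _ = v z + z *: v1 z); last first.
  by apply/matrixP => i j; rewrite !mxE; ring.
rewrite lax_defect1 LB1_affine -(mxcomm_LB0_LB2 (u z) _ (v z)) => D3.
have Df : is_derive z (1 : R) (fun t => zeta - t / zeta) (- zeta^-1).
  by apply: is_derive_eq; rewrite /GRing.scale /=; field.
have DLB : is_mxderive (fun t => LB zeta (u t) (v t)) z _ :=
  is_mxderiveD (is_mxderive_cst _ _) (is_mxderive_LB1 z).
have D : is_mxderive (fun t => calA t zeta) z _ :=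
  is_mxderiveB (is_mxderiveB (is_mxderiveN (is_mxderive_scale Df DLB))
    (is_mxderive_LB2 1 hw)) (is_mxderiveZ zeta^-1 D3).
rewrite (mxderE D) (mxderE (is_mxderive_LB _ _ _)) /calA /LB /LB3c /w.
rewrite !(mxcommNr, mxcommBr, mxcommDl, mxcommDr, mxcommZl, mxcommZr) !mxcommxx.
rewrite (mxcommC (LB1 _ _) (LB0 R n)).
by generalize_lax_atoms; field.
Qed.

End LaxPairs.

Unset Implicit Arguments.

Theorem proposition5 (R : realType) (n : nat) (A : 'M[R]_n) :
  (0 < n)%N -> A^T = - A ->
  (* (a) isospectral Lax pair *)
  (forall (beta : R) (u : R -> R) (v : R -> 'cV[R]_n),
     (forall z, derivable u z 1) -> (forall z, derivable (derive1 u) z 1) ->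
     mxderivable v -> mxderivable (mxder v) -> mxderivable (mxder (mxder v)) ->
     (forall z, (derive1 (derive1 u)) z = 3 / 2 * u z ^+ 2 - 3 / 2 * dotv (v z) (v z) + beta) ->
     (forall z, mxder (mxder (mxder v)) z =
        (3 * u z) *: mxder v z + (3 * (derive1 u) z) *: v z + A *m v z) ->
     let calA := fun (z zeta : R) =>
       zeta ^+ 3 *: LB0 R n + zeta ^+ 2 *: LB1 (u z) (v z)
       + zeta *: LB2 (u z) ((derive1 u) z) (v z) (mxder v z)
       + LB3ab A beta (u z) ((derive1 u) z) (v z) (mxder v z) (mxder (mxder v) z) in
     forall z zeta : R,
       mxder (fun t => calA t zeta) z
       = mxcomm (LB zeta (u z) (v z)) (calA z zeta))
  /\
  (* (b) isomonodromic Lax pair *)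
  (forall (u : R -> R) (v : R -> 'cV[R]_n),
     (forall z, derivable u z 1) -> (forall z, derivable (derive1 u) z 1) ->
     mxderivable v -> mxderivable (mxder v) -> mxderivable (mxder (mxder v)) ->
     (forall z, (derive1 (derive1 u)) z = 3 / 2 * u z ^+ 2 - 3 / 2 * dotv (v z) (v z) + z) ->
     (forall z, mxder (mxder (mxder v)) z =
        (3 * u z) *: mxder v z + (3 * (derive1 u) z) *: v z + A *m v z) ->
     let calA := fun (z zeta : R) =>
       zeta ^+ 4 *: LB0 R n + zeta ^+ 3 *: LB1 (u z) (v z)
       + zeta ^+ 2 *: LB2 (u z) ((derive1 u) z) (v z) (mxder v z)
       + zeta *: LB3ab A z (u z) ((derive1 u) z) (v z) (mxder v z) (mxder (mxder v) z)
       + LB4 R n in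
     forall z zeta : R,
       mxder (fun t => calA t zeta) z
       = mxder (fun s => LB s (u z) (v z)) zeta
         + mxcomm (LB zeta (u z) (v z)) (calA z zeta))
  /\
  (* (c) isomonodromic Lax pair *)
  (forall (u : R -> R) (v : R -> 'cV[R]_n),
     (forall z, derivable u z 1) -> (forall z, derivable (derive1 u) z 1) ->
     (forall z, derivable (derive1 (derive1 u)) z 1) ->
     mxderivable v -> mxderivable (mxder v) -> mxderivable (mxder (mxder v)) ->
     (forall z, (derive1 (derive1 (derive1 u))) z =
        3 * u z * (derive1 u) z - 3 * dotv (v z) (mxder v z) + z * (derive1 u) z + 2 * u z) ->
     (forall z, mxder (mxder (mxder v)) z =
        (3 * u z) *: mxder v z + (3 * (derive1 u) z) *: v z + z *: mxder v z
        + (A + 2%:M) *m v z) ->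
     let calA := fun (z zeta : R) =>
       - ((zeta - z / zeta) *: LB zeta (u z) (v z))
       - LB2 (u z) ((derive1 u) z) (v z) (mxder v z)
       - zeta^-1 *: LB3c A (u z) ((derive1 u) z) ((derive1 (derive1 u)) z) (v z) (mxder v z)
                     (mxder (mxder v) z) in
     forall z zeta : R, zeta != 0 ->
       mxder (fun t => calA t zeta) z
       = mxder (fun s => LB s (u z) (v z)) zeta
         + mxcomm (LB zeta (u z) (v z)) (calA z zeta)).
Proof.
move=> _ skewA; split; [|split].
- by move=> beta u v du du1 dv dv1 dv2; apply: isospectral_lax_pair.
- by move=> u v du du1 dv dv1 dv2; apply: isomonodromic_lax_pair_b.
- by move=> u v du du1 du2 dv dv1 dv2; apply: isomonodromic_lax_pair_c.
Qed.
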